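(* Let $\Gamma$ be a group and let $\mathcal{S}$ be a Gr-category of the type $(\Pi,A)$. Then every factor set $(\theta,F)$ on $\Gamma$ with coefficients in $\mathcal{S}$ is cohomologous to an enough strict factor set $(\mu,G)$ on $\Gamma$ with coefficients in $\mathcal{S}$.
   Context: Let $\Pi$ be a group and $A$ a left $\Pi$-module. A Gr-category of the type $(\Pi,A)$, $\mathcal{S}(\Pi,A,\xi)$, has as objects the elements of $\Pi$, only automorphisms as morphisms, $\mathrm{Aut}(x)=\{x\}\times A$, composition $(x,u)\circ(x,v)=(x,u+v)$, tensor $x\otimes y=xy$, $(x,u)\otimes(y,v)=(xy,u+xv)$, associativity constraint $a_{x,y,z}=(xyz,\xi(x,y,z))$ for a normalized 3-cocycle $\xi\in Z^3(\Pi,A)$, and strict unit constraints (unit object $I=1$). A monoidal functor is $F=(F,\widetilde F,\widehat F)$ with $\widetilde F_{x,y}:F(x\otimes y)\to F(x)\otimes F(y)$ and $\widehat F:F(I)\to I$. A factor set on $\Gamma$ with coefficients in $\mathcal{S}$ is a pair $(\theta,F)$: monoidal autoequivalences $F^\sigma:\mathcal{S}\to\mathcal{S}$ ($\sigma\in\Gamma$) and isomorphisms of monoidal functors $\theta^{\sigma,\tau}:F^\sigma F^\tau\to F^{\sigma\tau}$, such that $F^1=\mathrm{id}$, $\theta^{1,\sigma}=\mathrm{id}_{F^\sigma}=\theta^{\sigma,1}$, and $\theta^{\sigma\tau,\gamma}\circ(\theta^{\sigma,\tau}F^\gamma)=\theta^{\sigma,\tau\gamma}\circ(F^\sigma\theta^{\tau,\gamma})$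 for all $\sigma,\tau,\gamma$. A factor set $(\theta,F)$ is enough strict if $\widehat{F^\sigma}=\mathrm{id}_I$ for all $\sigma\in\Gamma$. Two factor sets $(\theta,F)$, $(\mu,G)$ are cohomologous if there is a family of isomorphisms of monoidal functors $u^\sigma:F^\sigma\to G^\sigma$ ($\sigma\in\Gamma$) with $u^1=\mathrm{id}$ and $u^{\sigma\tau}\circ\theta^{\sigma,\tau}=\mu^{\sigma,\tau}\circ(u^\sigma G^\tau)\circ(F^\sigma u^\tau)$ for all $\sigma,\tau\in\Gamma$. *)

From HB Require Import structures.
From mathcomp Require Import all_boot all_order all_algebra.
Set Implicit Arguments. Unset Strict Implicit. Unset Printing Implicit Defensive.
Import GRing.Theory.
Local Open Scope ring_scope.

Section GrCat.
Variables (Pi : groupType) (A : zmodType).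
Variable act : Pi -> A -> A.

Definition is_module : Prop :=
  [/\ forall x u v, act x (u + v) = act x u + act x v,
      forall u, act 1%g u = u &
      forall x y u, act (x * y)%g u = act x (act y u)].

Definition normalized_3cocycle (xi : Pi -> Pi -> Pi -> A) : Prop :=
  (forall x y z t,
     act x (xi y z t) - xi (x * y)%g z t + xi x (y * z)%g t
     - xi x y (z * t)%g + xi x y z = 0) /\
  (forall x y, xi 1%g x y = 0 /\ xi x 1%g y = 0 /\ xi x y 1%g = 0).

Variable xi : Pi -> Pi -> Pi -> A.

(* In S(Pi,A,xi): a morphism is an automorphism (x,u) of an object x,
   u : A.  Composition (x,u) o (x,v) = (x,u+v); identity (x,0). *)
Definition mcomp (u v : A) : A := u + v.
(* tensor (x,u) (x) (y,v) = (xy, u + x v); only the first object matters *)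
Definition mtens (x : Pi) (u v : A) : A := u + act x v.

(* Data of a (would-be) monoidal functor F = (F, F~, F^) on S:
   fobj = object map, fmor x = action of F on Aut(x) (landing in Aut(F x)),
   ftil x y = F~_{x,y} : F(xy) -> F(x)F(y), fhat = F^ : F(1) -> 1. *)
Record MFdata := MFData {
  fobj : Pi -> Pi;
  fmor : Pi -> A -> A;
  ftil : Pi -> Pi -> A;
  fhat : A }.

(* Axioms of a monoidal functor S -> S (strict unit constraints, associativity
   constraint a_{x,y,z} = (xyz, xi x y z)). *)
Record IsMonFun (F : MFdata) : Prop := {
  mf_comp : forall x u v, fmor F x (mcomp u v) = mcomp (fmor F x u) (fmor F x v);
  mf_id   : forall x, fmor F x 0 = 0;
  (* F~_{x,y} is a morphism F(xy) -> F(x)F(y), F^ a morphism F(1) -> 1 *)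
  mf_objM : forall x y, fobj F (x * y)%g = (fobj F x * fobj F y)%g;
  mf_obj1 : fobj F 1%g = 1%g;
  mf_nat  : forall x y u v,
     mcomp (ftil F x y) (fmor F (x * y)%g (mtens x u v))
     = mcomp (mtens (fobj F x) (fmor F x u) (fmor F y v)) (ftil F x y);
  (* compatibility with associativity:
     a_{Fx,Fy,Fz} o (F~_{x,y} (x) id) o F~_{xy,z}
       = (id (x) F~_{y,z}) o F~_{x,yz} o F(a_{x,y,z}) *)
  mf_assoc : forall x y z,
     mcomp (xi (fobj F x) (fobj F y) (fobj F z))
       (mcomp (mtens (fobj F x * fobj F y)%g (ftil F x y) 0) (ftil F (x * y)%g z))
     = mcomp (mtens (fobj F x) 0 (ftil F y z))
       (mcomp (ftil F x (y * z)%g) (fmor F (x * y * z)%g (xi x y z)));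
  (* compatibility with (strict) unit constraints:
     l_{Fx} o (F^ (x) id) o F~_{1,x} = F(l_x),
     r_{Fx} o (id (x) F^) o F~_{x,1} = F(r_x) *)
  mf_lunit : forall x,
     mcomp 0 (mcomp (mtens 1%g (fhat F) 0) (ftil F 1%g x)) = fmor F (1 * x)%g 0;
  mf_runit : forall x,
     mcomp 0 (mcomp (mtens (fobj F x) 0 (fhat F)) (ftil F x 1%g)) = fmor F (x * 1)%g 0 }.

Definition id_MF : MFdata := MFData (fun x => x) (fun _ u => u) (fun _ _ => 0) 0.

(* composite F G = F o G, with (FG)~ = F~_{Gx,Gy} o F(G~_{x,y}),
   (FG)^ = F^ o F(G^) *)
Definition comp_MF (F G : MFdata) : MFdata :=
  MFData (fun x => fobj F (fobj G x))
         (fun x u => fmor F (fobj G x) (fmor G x u))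
         (fun x y => mcomp (ftil F (fobj G x) (fobj G y))
                           (fmor F (fobj G (x * y)%g) (ftil G x y)))
         (mcomp (fhat F) (fmor F (fobj G 1%g) (fhat G))).

(* alpha : F -> G is a morphism of monoidal functors (components
   alpha_x : F x -> G x).  Every morphism of S is invertible, so such an
   alpha is automatically an isomorphism of monoidal functors. *)
Record IsMonNat (F G : MFdata) (alpha : Pi -> A) : Prop := {
  mn_obj : forall x, fobj F x = fobj G x;
  mn_nat : forall x u, mcomp (alpha x) (fmor F x u) = mcomp (fmor G x u) (alpha x);
  mn_til : forall x y, mcomp (ftil G x y) (alpha (x * y)%g)
                       = mcomp (mtens (fobj F x) (alpha x) (alpha y)) (ftil F x y);
  mn_hat : mcomp (fhat G) (alpha 1%g) = fhat F }.

Definition IsMonAutoEq (F : MFdata) : Prop :=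
  IsMonFun F /\
  exists G : MFdata, IsMonFun G /\
    (exists alpha, IsMonNat (comp_MF G F) id_MF alpha) /\
    (exists beta, IsMonNat (comp_MF F G) id_MF beta).

Variable Gam : groupType.

Definition IsFactorSet (F : Gam -> MFdata) (theta : Gam -> Gam -> Pi -> A) : Prop :=
  [/\ forall s, IsMonAutoEq (F s),
      forall s t, IsMonNat (comp_MF (F s) (F t)) (F (s * t)%g) (theta s t),
      F 1%g = id_MF,
      forall s x, theta 1%g s x = 0 /\ theta s 1%g x = 0 &
      (* theta^{st,g} o (theta^{s,t} F^g) = theta^{s,tg} o (F^s theta^{t,g}) *)
      forall s t g x,
        mcomp (theta (s * t)%g g x) (theta s t (fobj (F g) x))
        = mcomp (theta s (t * g)%g x)
                (fmor (F s) (fobj (F t) (fobj (F g) x)) (theta t g x))].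

Definition enough_strict (F : Gam -> MFdata) : Prop :=
  forall s, fhat (F s) = 0.

Definition cohomologous (F : Gam -> MFdata) (theta : Gam -> Gam -> Pi -> A)
    (G : Gam -> MFdata) (mu : Gam -> Gam -> Pi -> A) : Prop :=
  exists u : Gam -> Pi -> A,
    [/\ forall s, IsMonNat (F s) (G s) (u s),
        forall x, u 1%g x = 0 &
        (* u^{st} o theta^{s,t} = mu^{s,t} o (u^s G^t) o (F^s u^t) *)
        forall s t x,
          mcomp (u (s * t)%g x) (theta s t x)
          = mcomp (mu s t x)
              (mcomp (u s (fobj (G t) x)) (fmor (F s) (fobj (F t) x) (u t x)))].

End GrCat.

From HB Require Import structures.
From mathcomp Require Import all_boot all_order all_algebra.
From Stdlib Require Import FunctionalExtensionality.
(* Every monoidal functor [F] of [S(Pi,A,xi)] acts on all the groups [Aut(x)]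
   by one and the same additive map of [A].  Hence the constant family with
   value [F^] is a monoidal isomorphism from [F] to the functor obtained by
   absorbing [F^] into [F~], whose unit constraint is the identity.
   Conjugating [theta] by these isomorphisms yields a factor set [(mu, G)]
   cohomologous to [(theta, F)] with every [G^s] enough strict.  All the
   coherence conditions to be checked are equations in the abelian group [A],
   which is why they reduce to those of [(theta, F)]. *)

Set Implicit Arguments. Unset Strict Implicit. Unset Printing Implicit Defensive.
Import GRing.Theory.
Local Open Scope ring_scope.

Section ZmodExpressions.
Variable V : zmodType.

Inductive zexpr := ZVar of nat | ZAdd of zexpr & zexpr | ZOpp of zexpr | ZZero.

Fixpoint zeval (env : seq V) (e : zexpr) : V :=
  match e with
  | ZVar n => nth 0 env n
  | ZAdd e1 e2 => zeval env e1 + zeval env e2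
  | ZOpp e1 => - zeval env e1
  | ZZero => 0
  end.

Fixpoint zcoef (e : zexpr) (n : nat) : int :=
  match e with
  | ZVar m => (m == n)%:Z
  | ZAdd e1 e2 => zcoef e1 n + zcoef e2 n
  | ZOpp e1 => - zcoef e1 n
  | ZZero => 0
  end.

Lemma zeval_coef env e : zeval env e = \sum_(i < size env) env`_i *~ zcoef e i.
Proof.
elim: e => [m|e1 IH1 e2 IH2|e1 IH1|] /=.
- case: (ltnP m (size env)) => Hm.
    rewrite (bigD1 (Ordinal Hm)) //= eqxx mulr1z big1 ?addr0 // => i /negbTE.
    by rewrite -(inj_eq val_inj) /= eq_sym => ->; rewrite mulr0z.
  rewrite nth_default // big1 // => i _.
  have /negbTE -> : m != i by rewrite neq_ltn (leq_trans (ltn_ord i) Hm) orbT.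
  by rewrite mulr0z.
- by rewrite IH1 IH2 -big_split; apply: eq_bigr => i _; rewrite mulrzDr.
- by rewrite IH1 -sumrN; apply: eq_bigr => i _; rewrite mulrNz.
- by rewrite big1 // => i _; rewrite mulr0z.
Qed.

Lemma zeval_eq env e1 e2 :
  all (fun i => zcoef e1 i == zcoef e2 i) (iota 0 (size env)) ->
  zeval env e1 = zeval env e2.
Proof.
move/allP=> Hcoef; rewrite !zeval_coef; apply: eq_bigr => i _.
by rewrite (eqP (Hcoef _ _)) // mem_iota /= add0n.
Qed.

Lemma eq_by_difference (l r l' r' : V) : l' = r' -> l + r' = r + l' -> l = r.
Proof. by move=> ->; move/addIr. Qed.

Lemma eq_by_sum (l r l' r' : V) : l' = r' -> l + l' = r + r' -> l = r.
Proof. by move=> ->; move/addIr. Qed.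

End ZmodExpressions.

(* Atoms are compared up to conversion, so that e.g. a projection of
   [comp_MF F G] and its reduct are the same variable. *)
Ltac zfind x l :=
  match l with
  | ?y :: _ => let _ := constr:(@erefl _ x : x = y) in constr:(0%N)
  | _ :: ?l' => let n := zfind x l' in constr:(n.+1)
  end.

Ltac zatoms e l :=
  match e with
  | (?a + ?b)%R => let l1 := zatoms a l in zatoms b l1
  | (- ?a)%R => zatoms a l
  | 0%R => l
  | _ => let l' := match goal with
                    | _ => let _ := zfind e l in l
                    | _ => constr:(e :: l)
                    end in l'
  end.

Ltac zreify e l :=
  match e with
  | (?a + ?b)%R => let x := zreify a l in let y := zreify b l in constr:(ZAdd x y)
  | (- ?a)%R => let x := zreify a l in constr:(ZOpp x)
  | 0%R => constr:(ZZero)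
  | _ => let n := zfind e l in constr:(ZVar n)
  end.

Ltac zmod_eq :=
  match goal with
  | |- ?l = ?r =>
    let T := type of l in
    let env := zatoms l (@nil T) in
    let env := zatoms r env in
    let el := zreify l env in let er := zreify r env in
    change (zeval env el = zeval env er); apply: zeval_eq; vm_compute; reflexivity
  end.

(* Proves [l = r] from [H : l' = r'] when [l - r = +-(l' - r')] holds in every
   abelian group. *)
Ltac zmod_eq_by H :=
  first [apply: (eq_by_difference H); zmod_eq | apply: (eq_by_sum H); zmod_eq].

Section MonoidalFunctors.
Variables (Pi : groupType) (A : zmodType) (act : Pi -> A -> A)
  (xi : Pi -> Pi -> Pi -> A).
Hypothesis Hmod : is_module act.

Lemma actD x u v : act x (u + v) = act x u + act x v.
Proof. by case: Hmod. Qed.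

Lemma act1 u : act 1%g u = u.
Proof. by case: Hmod. Qed.

Lemma actM x y u : act (x * y)%g u = act x (act y u).
Proof. by case: Hmod. Qed.

Lemma act0 x : act x 0 = 0.
Proof. by apply: (@addrI _ (act x 0)); rewrite -actD !addr0. Qed.

Lemma actN x u : act x (- u) = - act x u.
Proof. by apply/eqP; rewrite -addr_eq0 -actD addNr act0. Qed.

Definition fmor1 (F : MFdata Pi A) : A -> A := fmor F 1%g.

Section OneFunctor.
Variable F : MFdata Pi A.
Hypothesis HF : IsMonFun act xi F.

(* Naturality of [F~] at [(1, x)] shows that [F] acts on every [Aut(x)] by
   the same map. *)
Lemma fmor_const x u : fmor F x u = fmor1 F u.
Proof.
have := mf_nat HF 1%g x u 0.
rewrite /mcomp /mtens act0 (mf_id HF) act0 !addr0 mul1g addrC.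
exact: addIr.
Qed.

Lemma fmor1D u v : fmor1 F (u + v) = fmor1 F u + fmor1 F v.
Proof. exact: (mf_comp HF). Qed.

Lemma fmor10 : fmor1 F 0 = 0.
Proof. exact: (mf_id HF). Qed.

Lemma fmor1N u : fmor1 F (- u) = - fmor1 F u.
Proof. by apply/eqP; rewrite -addr_eq0 -fmor1D addNr fmor10. Qed.

Lemma fmor1_act x u : fmor1 F (act x u) = act (fobj F x) (fmor1 F u).
Proof.
have := mf_nat HF x 1%g 0 u.
rewrite /mcomp /mtens mulg1 (mf_id HF) !add0r !fmor_const addrC.
exact: addIr.
Qed.

End OneFunctor.

Lemma mon_nat_fmor F G a : IsMonNat act F G a -> forall x u, fmor G x u = fmor F x u.
Proof. by move=> Ha x u; move: (mn_nat Ha x u); rewrite /mcomp addrC => /addIr. Qed.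

Lemma mon_nat_ftil F G a : IsMonNat act F G a -> forall x y,
  ftil G x y = a x + act (fobj F x) (a y) + ftil F x y - a (x * y)%g.
Proof. by move=> Ha x y; have := mn_til Ha x y; rewrite /mcomp /mtens => T; zmod_eq_by T. Qed.

Lemma mon_nat_fhat F G a : IsMonNat act F G a -> fhat G = fhat F - a 1%g.
Proof. by move=> Ha; have := mn_hat Ha; rewrite /mcomp => T; zmod_eq_by T. Qed.

Lemma mon_nat_inv F G a : IsMonNat act F G a -> IsMonNat act G F (fun x => - a x).
Proof.
move=> Ha; split.
- by move=> x; rewrite (mn_obj Ha).
- by move=> x u; rewrite /mcomp (mon_nat_fmor Ha) addrC.
- move=> x y; rewrite /mcomp /mtens -(mn_obj Ha) actN (mon_nat_ftil Ha); zmod_eq.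
- by rewrite /mcomp (mon_nat_fhat Ha); zmod_eq.
Qed.

Lemma mon_nat_comp F G H a b : IsMonNat act F G a -> IsMonNat act G H b ->
  IsMonNat act F H (fun x => a x + b x).
Proof.
move=> Ha Hb; split.
- by move=> x; rewrite (mn_obj Ha) (mn_obj Hb).
- by move=> x u; rewrite /mcomp (mon_nat_fmor Hb) (mon_nat_fmor Ha) addrC.
- move=> x y; rewrite /mcomp /mtens (mon_nat_ftil Hb) (mon_nat_ftil Ha) -(mn_obj Ha) actD.
  zmod_eq.
- by rewrite /mcomp (mon_nat_fhat Hb) (mon_nat_fhat Ha); zmod_eq.
Qed.

Lemma mon_nat_whiskerR F F' G a : IsMonFun act xi G -> IsMonNat act F F' a ->
  IsMonNat act (comp_MF F G) (comp_MF F' G) (fun x => a (fobj G x)).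
Proof.
move=> HG Ha; split => /=.
- by move=> x; rewrite (mn_obj Ha).
- by move=> x u; rewrite /mcomp (mon_nat_fmor Ha) addrC.
- move=> x y; rewrite /mcomp /mtens !(mon_nat_fmor Ha) (mon_nat_ftil Ha) (mf_objM HG).
  zmod_eq.
- by rewrite /mcomp !(mon_nat_fmor Ha) (mon_nat_fhat Ha) (mf_obj1 HG); zmod_eq.
Qed.

Lemma mon_nat_whiskerL F G G' b : IsMonFun act xi F -> IsMonNat act G G' b ->
  IsMonNat act (comp_MF F G) (comp_MF F G') (fun x => fmor F (fobj G x) (b x)).
Proof.
move=> HF Hb; split => /=.
- by move=> x; rewrite (mn_obj Hb).
- by move=> x u; rewrite /mcomp !(fmor_const HF) (mon_nat_fmor Hb) addrC.
- move=> x y; rewrite /mcomp /mtens -!(mn_obj Hb) !(fmor_const HF) (mon_nat_ftil Hb).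
  by rewrite !(fmor1D HF) (fmor1N HF) (fmor1_act HF); zmod_eq.
- rewrite /mcomp !(fmor_const HF) (mon_nat_fhat Hb) (fmor1D HF) (fmor1N HF); zmod_eq.
Qed.

Lemma mon_fun_transport F G a : IsMonFun act xi F -> IsMonNat act F G a ->
  IsMonFun act xi G.
Proof.
move=> HF Ha; have objG x : fobj G x = fobj F x by rewrite (mn_obj Ha).
split.
- by move=> x u v; rewrite !(mon_nat_fmor Ha) (mf_comp HF).
- by move=> x; rewrite (mon_nat_fmor Ha) (mf_id HF).
- by move=> x y; rewrite !objG (mf_objM HF).
- by rewrite objG (mf_obj1 HF).
- move=> x y u v; have := mf_nat HF x y u v.
  rewrite /mcomp /mtens !objG !(mon_nat_fmor Ha) => T; zmod_eq_by T.
- move=> x y z; have := mf_assoc HF x y z.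
  rewrite /mcomp /mtens !objG !(mon_nat_fmor Ha) !(mon_nat_ftil Ha).
  rewrite !act0 !actD !actN -!actM -!(mf_objM HF) !mulgA => T; zmod_eq_by T.
- move=> x; have := mf_lunit HF x.
  rewrite /mcomp /mtens ?objG !(mon_nat_fmor Ha) (mon_nat_ftil Ha) (mon_nat_fhat Ha).
  rewrite (mf_obj1 HF) !act1 mul1g => T; zmod_eq_by T.
- move=> x; have := mf_runit HF x.
  rewrite /mcomp /mtens ?objG !(mon_nat_fmor Ha) (mon_nat_ftil Ha) (mon_nat_fhat Ha).
  rewrite !actD actN mulg1 => T; zmod_eq_by T.
Qed.

Lemma mon_autoeq_transport F G a : IsMonAutoEq act xi F -> IsMonNat act F G a ->
  IsMonAutoEq act xi G.
Proof.
move=> [HF [H [HH [[al Hal] [be Hbe]]]]] Ha.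
split; first exact: mon_fun_transport Ha.
exists H; split => //; split; eexists.
- exact: mon_nat_comp (mon_nat_whiskerL HH (mon_nat_inv Ha)) Hal.
- exact: mon_nat_comp (mon_nat_whiskerR HH (mon_nat_inv Ha)) Hbe.
Qed.

Definition strict_MF (F : MFdata Pi A) : MFdata Pi A :=
  MFData (fobj F) (fmor F) (fun x y => ftil F x y + act (fobj F x) (fhat F)) 0.

Lemma strict_MF_nat F : IsMonNat act F (strict_MF F) (fun _ => fhat F).
Proof.
split => //= [x u|x y|]; rewrite /mcomp /mtens; [exact: addrC | zmod_eq | exact: add0r].
Qed.

Lemma strict_MF_id : strict_MF (id_MF Pi A) = id_MF Pi A.
Proof.
congr MFData; apply: functional_extensionality => x.
by apply: functional_extensionality => y; rewrite act0 addr0.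
Qed.

Section FactorSetTransport.
Variables (Gam : groupType) (F G : Gam -> MFdata Pi A)
  (theta : Gam -> Gam -> Pi -> A) (u : Gam -> Pi -> A).
Hypotheses (HFt : IsFactorSet act xi F theta)
  (Hu : forall s, IsMonNat act (F s) (G s) (u s))
  (Hu1 : forall x, u 1%g x = 0) (HG1 : G 1%g = id_MF Pi A).

(* The components of [u^{st} o theta^{s,t} o (F^s u^t)^-1 o (u^s G^t)^-1]. *)
Definition transported_factor s t x :=
  - u s (fobj (G t) x) + fmor (F s) (fobj (G t) x) (- u t x) + theta s t x
  + u (s * t)%g x.

Let HF s : IsMonFun act xi (F s).
Proof. by case: HFt => /(_ s) []. Qed.

Let objG s x : fobj (G s) x = fobj (F s) x.
Proof. by rewrite (mn_obj (Hu s)). Qed.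

Let fmor1M s t v : fmor1 (F s) (fmor1 (F t) v) = fmor1 (F (s * t)%g) v.
Proof.
case: HFt => _ /(_ s t) Htheta _ _ _; have := mn_nat Htheta 1%g v.
by rewrite /mcomp /= addrC !(fmor_const (HF _)) => /addIr.
Qed.

Lemma transported_factor_set : IsFactorSet act xi G transported_factor.
Proof.
case: HFt => Hauto Htheta HF1 Hunit Hcocycle; split => //.
- by move=> s; apply: mon_autoeq_transport (Hu s).
- move=> s t.
  apply: mon_nat_comp (Hu (s * t)%g).
  apply: mon_nat_comp (Htheta s t).
  apply: mon_nat_comp (mon_nat_whiskerL (HF s) (mon_nat_inv (Hu t))).
  exact: mon_nat_whiskerR (mon_fun_transport (HF t) (Hu t)) (mon_nat_inv (Hu s)).
- move=> s x; rewrite /transported_factor HF1 HG1 /= mul1g mulg1 !Hu1.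
  by rewrite (Hunit s x).1 (Hunit s x).2 oppr0 (mf_id (HF s)); split; zmod_eq.
- move=> s t g x; rewrite /transported_factor /mcomp !(mon_nat_fmor (Hu s)) !objG.
  rewrite !(fmor_const (HF _)) !(fmor1D (HF s)) !(fmor1N (HF _)) !fmor1M mulgA.
  rewrite -(mn_obj (Htheta t g)) /=.
  have := Hcocycle s t g x; rewrite /mcomp (fmor_const (HF s)) => T; zmod_eq_by T.
Qed.

Lemma transported_cohomologous : cohomologous act F theta G transported_factor.
Proof.
exists u; split => // s t x.
rewrite /transported_factor /mcomp !(fmor_const (HF s)) (fmor1N (HF s)); zmod_eq.
Qed.

End FactorSetTransport.

End MonoidalFunctors.

Theorem lemma3p3 (Gam Pi : groupType) (A : zmodType) (act : Pi -> A -> A)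
    (xi : Pi -> Pi -> Pi -> A) :
  is_module act -> normalized_3cocycle act xi ->
  forall (F : Gam -> MFdata Pi A) (theta : Gam -> Gam -> Pi -> A),
    IsFactorSet act xi F theta ->
    exists (G : Gam -> MFdata Pi A) (mu : Gam -> Gam -> Pi -> A),
      IsFactorSet act xi G mu /\ enough_strict G /\ cohomologous act F theta G mu.
Proof.
move=> Hmod _ F theta HFt.
pose G s := strict_MF act (F s).
pose u s (_ : Pi) := fhat (F s).
have Hu s : IsMonNat act (F s) (G s) (u s) by apply: strict_MF_nat.
have Hu1 x : u 1%g x = 0 by rewrite /u; case: HFt => _ _ -> _ _.
have HG1 : G 1%g = id_MF Pi A by case: HFt => _ _ HF1 _ _; rewrite /G HF1 strict_MF_id.
exists G, (transported_factor F G theta u); split; last split.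
- exact: (transported_factor_set Hmod HFt Hu Hu1 HG1).
- by [].
- exact: (transported_cohomologous Hmod HFt Hu Hu1).
Qed.
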